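(* Let $L\ge 2$ be an integer and let $a_0,\dots,a_{L-2},b_0,\dots,b_{L-1}$ and $\tilde a_0,\dots,\tilde a_{L-2},\tilde b_0,\dots,\tilde b_{L-1}$ be real numbers. Let $\mathcal{B}\in\mathcal{L}^{2}$ and $\tilde{\mathcal{B}}\in\mathcal{L}^{2,c}$ (with lag $l<L$) be single-input single-output behaviors with signals $w=(u,y)$, and suppose their length-$L$ restricted behaviors, written in the coordinate ordering $w=\mathrm{col}(y_0,u_0,y_1,u_1,\dots,y_{L-2},u_{L-2},u_{L-1},y_{L-1})\in\mathbb{R}^{2L}$, are $$\mathcal{B}|_L=\Big\{w:\ y_{L-1}=\sum_{k=0}^{L-2}a_k y_k+\sum_{k=0}^{L-1}b_k u_k\Big\},\qquad \tilde{\mathcal{B}}|_L=\Big\{w:\ y_{L-1}=\sum_{k=0}^{L-2}\tilde a_k y_k+\sum_{k=0}^{L-1}\tilde b_k u_k\Big\}.$$ Define the row vectors $F=[a_0\ b_0\ a_1\ b_1\ \cdots\ a_{L-2}\ b_{L-2}\ b_{L-1}]$ and $\tilde F=[\tilde a_0\ \tilde b_0\ \cdots\ \tilde a_{L-2}\ \tilde b_{L-2}\ \tilde b_{L-1}]$ in $\mathbb{R}^{1\times(2L-1)}$. If $\|F-\tilde F\|_2\le\epsilon$, then $\mathrm{gap}_L(\mathcal{B},\tilde{\mathcal{B}})\le\epsilon$.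
   Context: $\mathcal{L}^{q}$: class of complete (closed under pointwise convergence) linear time-invariant behaviors $\mathcal{B}\subseteq(\mathbb{R}^q)^{\mathbb{Z}_{\ge0}}$; $\mathcal{L}^{q,c}$ the subclass with complexity $c=(m,l,n)$ (number of inputs, lag, order). The restricted behavior $\mathcal{B}|_L\subseteq\mathbb{R}^{qL}$ is the set of length-$L$ windows of trajectories of $\mathcal{B}$ (here with coordinates ordered as in the claim, the same ordering used for both behaviors). For subspaces $\mathcal{V},\mathcal{W}\subseteq\mathbb{R}^N$ with orthogonal projectors $P_{\mathcal{V}},P_{\mathcal{W}}$, $\mathrm{gap}(\mathcal{V},\mathcal{W})=\|P_{\mathcal{V}}-P_{\mathcal{W}}\|_2$ (spectral norm), and $\mathrm{gap}_L(\mathcal{B},\tilde{\mathcal{B}})=\mathrm{gap}(\mathcal{B}|_L,\tilde{\mathcal{B}}|_L)$. For a row vector, $\|\cdot\|_2$ is the Euclidean norm. *)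

From HB Require Import structures.
From mathcomp Require Import all_boot all_order all_algebra.
From mathcomp Require Import boolp classical_sets reals topology normedtype sequences.
Set Implicit Arguments. Unset Strict Implicit. Unset Printing Implicit Defensive.
Import Order.TTheory GRing.Theory Num.Theory numFieldNormedType.Exports.
Local Open Scope ring_scope.
Local Open Scope classical_set_scope.

Section Defs.
Variable R : realType.

(* A trajectory of a 2-variable (SISO) system on Z_{>=0}: w t = (u t, y t). *)
Definition traj := nat -> R * R.

Definition is_linear_beh (B : set traj) : Prop :=
  B (fun _ => (0, 0)) /\
  forall (c : R) (w v : traj), B w -> B v ->
    B (fun t => (c * (w t).1 + (v t).1, c * (w t).2 + (v t).2)).

Definition is_shift_inv (B : set traj) : Prop :=
  forall w : traj, B w -> B (fun t => w t.+1).

Definition is_complete_beh (B : set traj) : Prop :=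
  forall (ws : nat -> traj) (w : traj), (forall n, B (ws n)) ->
    (forall t, (fun n => (ws n t).1) @ \oo --> (w t).1 /\
               (fun n => (ws n t).2) @ \oo --> (w t).2) ->
    B w.

Definition in_L2 (B : set traj) : Prop :=
  [/\ is_linear_beh B, is_shift_inv B & is_complete_beh B].

Definition l_complete (l : nat) (B : set traj) : Prop :=
  forall w : traj, B w <->
    (forall t, exists2 w', B w' & forall k, (k <= l)%N -> w' k = w (t + k)%N).

(* The lag of B is < L (lag = least l with B l-complete). *)
Definition lag_lt (B : set traj) (L : nat) : Prop :=
  exists l, (l < L)%N /\ l_complete l B.

(* Coordinate of the length-L window of w in the ordering
   col(y_0,u_0,y_1,u_1,...,y_{L-2},u_{L-2},u_{L-1},y_{L-1}). *)
Definition wcoord (L : nat) (w : traj) (i : nat) : R :=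
  if (i < 2 * L - 2)%N then (if odd i then (w i./2).1 else (w i./2).2)
  else if i == (2 * L - 2)%N then (w L.-1).1 else (w L.-1).2.

Definition window (L : nat) (w : traj) : 'rV[R]_(2 * L) :=
  \row_(i < 2 * L) wcoord L w i.

Definition restr (L : nat) (B : set traj) : set 'rV[R]_(2 * L) :=
  [set v | exists w t, B w /\ v = window L (fun k => w (t + k)%N)].

(* nat-indexed access to a row vector (0 outside the range) *)
Definition vat (N : nat) (v : 'rV[R]_N) (j : nat) : R :=
  match insub j with Some i => v 0 i | None => 0 end.

Definition uidx (L k : nat) : nat := if (k < L.-1)%N then (2 * k).+1 else (2 * L - 2)%N.

Definition arx_set (L : nat) (a b : nat -> R) : set 'rV[R]_(2 * L) :=
  [set v | vat v (2 * L - 1) =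
           \sum_(k < L.-1) a k * vat v (2 * k) + \sum_(k < L) b k * vat v (uidx L k)].

Definition Fvec (L : nat) (a b : nat -> R) : 'rV[R]_(2 * L - 1) :=
  \row_(j < 2 * L - 1)
    (if (j < 2 * L - 2)%N then (if odd j then b j./2 else a j./2) else b L.-1).

Definition norm2 (N : nat) (v : 'rV[R]_N) : R := Num.sqrt (\sum_i v 0 i ^+ 2).

Definition specnorm (N : nat) (M : 'M[R]_N) : R :=
  sup [set r | exists x : 'rV[R]_N, norm2 x <= 1 /\ r = norm2 (x *m M)].

Definition is_orth_proj (N : nat) (V : set 'rV[R]_N) (P : 'M[R]_N) : Prop :=
  forall x : 'rV[R]_N, V (x *m P) /\
    forall v, V v -> (x - x *m P) *m v^T = 0.

Definition orth_proj (N : nat) (V : set 'rV[R]_N) : 'M[R]_N :=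
  xget 0 [set P | is_orth_proj V P].

Definition gap (N : nat) (V W : set 'rV[R]_N) : R :=
  specnorm (orth_proj V - orth_proj W).

Definition gapL (L : nat) (B Bt : set traj) : R := gap (@restr L B) (@restr L Bt).

End Defs.
Arguments window {R} L w.
Arguments restr {R} L B.
Arguments arx_set {R} L a b.
Arguments Fvec {R} L a b.
Arguments wcoord {R} L w i.
Arguments lag_lt {R} B L.
Arguments l_complete {R} l B.
Arguments gapL {R} L B Bt.

(* Both restricted behaviors are hyperplanes of R^(2L), with normals
   n = [F, -1] and m = [F~, -1] in the chosen ordering.  For hyperplanes the gap
   is the sine of the angle between the normals: if x has norm at most 1, the
   nonnegativity of the Gram determinant of x, n, m bounds |x (P_n - P_m)|^2 by
   1 - <n,m>^2/(|n|^2 |m|^2).  Because the normals share the last coordinate -1,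
   this quantity is at most |F - F~|^2. *)

From HB Require Import structures.
From mathcomp Require Import all_boot all_order all_algebra.
From mathcomp Require Import boolp classical_sets reals topology normedtype sequences.
From mathcomp Require Import ring zify.
Import Order.TTheory GRing.Theory Num.Theory.
Local Open Scope ring_scope.
Set Implicit Arguments. Unset Strict Implicit.

Section RowDot.
Variables (R : realType) (N : nat).
Implicit Types x y z n m : 'rV[R]_N.

Definition dot x y : R := \sum_i x 0 i * y 0 i.

Lemma mulmx_trE x y : x *m y^T = (dot x y)%:M.
Proof.
apply/matrixP => i j; rewrite !ord1 !mxE /= mulr1n.
by apply: eq_bigr => k _; rewrite !mxE.
Qed.

Lemma dotC x y : dot x y = dot y x.
Proof. by apply: eq_bigr => i _; rewrite mulrC. Qed.

Lemma dotBl x y z : dot (x - y) z = dot x z - dot y z.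
Proof. by rewrite /dot -sumrB; apply: eq_bigr => i _; rewrite !mxE mulrBl. Qed.

Lemma dotZl (c : R) x z : dot (c *: x) z = c * dot x z.
Proof. by rewrite /dot mulr_sumr; apply: eq_bigr => i _; rewrite !mxE mulrA. Qed.

Lemma dotBr x y z : dot z (x - y) = dot z x - dot z y.
Proof. by rewrite dotC dotBl !(dotC z). Qed.

Lemma dotZr (c : R) x z : dot z (c *: x) = c * dot z x.
Proof. by rewrite dotC dotZl dotC. Qed.

Lemma dot0l x : dot 0 x = 0.
Proof. by rewrite /dot big1 // => i _; rewrite mxE mul0r. Qed.

Lemma dot_ge0 x : 0 <= dot x x.
Proof. by apply: sumr_ge0 => i _; rewrite -expr2 sqr_ge0. Qed.

Lemma dot_eq0 x : (dot x x == 0) = (x == 0).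
Proof.
apply/eqP/eqP => [x0|->]; last exact: dot0l.
apply/matrixP => i j; rewrite ord1 mxE.
have /eqP : x 0 j * x 0 j = 0.
  by apply: (psumr_eq0P (P := predT) _ x0) => // k _; rewrite -expr2 sqr_ge0.
by rewrite mulf_eq0 orbb => /eqP.
Qed.

Lemma dot_gt0 x : (0 < dot x x) = (x != 0).
Proof. by rewrite lt_def dot_ge0 dot_eq0 andbT. Qed.

Lemma norm2_dot x : norm2 x = Num.sqrt (dot x x).
Proof. by congr Num.sqrt; apply: eq_bigr => i _; rewrite expr2. Qed.

Lemma dot_sqr_le x y : dot x y ^+ 2 <= dot x x * dot y y.
Proof.
have [->|y0] := eqVneq y 0; first by rewrite dotC !dot0l expr0n mulr0.
have yp : 0 < dot y y by rewrite dot_gt0.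
have := dot_ge0 (x - (dot x y / dot y y) *: y).
rewrite !(dotBl, dotBr, dotZl, dotZr) (dotC y x) => h.
have yVp : 0 < (dot y y)^-1 by rewrite invr_gt0.
rewrite -subr_ge0 -(pmulr_rge0 _ yVp); move: h; congr (0 <= _).
by field; rewrite gt_eqF.
Qed.

(* The 3x3 Gram determinant of x, n, m is nonnegative; expanded, this is
   Cauchy-Schwarz for the components of x and m orthogonal to n. *)
Lemma gram3_det_ge0 x n m : n != 0 ->
  dot n n * dot x m ^+ 2 - 2 * dot x n * dot x m * dot n m + dot x n ^+ 2 * dot m m
    <= dot x x * (dot n n * dot m m - dot n m ^+ 2).
Proof.
move=> n0; have := dot_sqr_le (dot n n *: x - dot x n *: n) (dot n n *: m - dot n m *: n).
rewrite !(dotBl, dotBr, dotZl, dotZr) (dotC n x) (dotC m n).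
set s := dot n n; set a := dot x n; set b := dot x m; set g := dot n m.
set X := dot x x; set t := dot m m => cs.
have s_gt0 : 0 < s by rewrite dot_gt0.
have {}cs : s ^+ 2 * (s * b - a * g) ^+ 2
    <= s ^+ 2 * ((s * X - a ^+ 2) * (s * t - g ^+ 2)).
  by move: cs; congr (_ <= _); ring.
rewrite ler_pM2l ?exprn_gt0 // in cs.
rewrite -(ler_pM2l s_gt0) -subr_ge0; rewrite -subr_ge0 in cs.
by move: cs; congr (0 <= _); ring.
Qed.

Definition hyperplane n : set 'rV[R]_N := [set v | dot v n = 0].

Definition hyperplane_proj n : 'M[R]_N := 1%:M - (dot n n)^-1 *: (n^T *m n).

Lemma hyperplane_projE x n :
  x *m hyperplane_proj n = x - (dot x n / dot n n) *: n.
Proof.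
rewrite mulmxBr mulmx1 -scalemxAr mulmxA mulmx_trE mul_scalar_mx scalerA.
by rewrite mulrC.
Qed.

Lemma hyperplane_proj_is_orth_proj n :
  n != 0 -> is_orth_proj (hyperplane n) (hyperplane_proj n).
Proof.
rewrite -dot_eq0 => n0 x; split.
  by rewrite /hyperplane /= hyperplane_projE dotBl dotZl mulfVK // subrr.
move=> v; rewrite /hyperplane /= => vn.
rewrite hyperplane_projE opprB addrC subrK mulmx_trE dotZl (dotC n) vn mulr0.
by rewrite raddf0.
Qed.

Lemma orth_proj_unique (V : set 'rV[R]_N) (P Q : 'M[R]_N) :
  (forall u v, V u -> V v -> V (u - v)) ->
  is_orth_proj V P -> is_orth_proj V Q -> P = Q.
Proof.
move=> VB hP hQ; apply/row_matrixP => i; rewrite !rowE; set x := 'e_i.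
have [VP oP] := hP x; have [VQ oQ] := hQ x.
set z := x *m Q - x *m P.
have Vz : V z by exact: VB.
have dot_z w : (w *m z^T = 0) -> dot w z = 0.
  by rewrite mulmx_trE => /matrixP/(_ 0 0); rewrite !mxE /= mulr1n.
have : dot z z = 0.
  have zE : z = (x - x *m P) - (x - x *m Q) by rewrite opprB addrC subrKA.
  by rewrite {1}zE dotBl !dot_z ?subrr ?oP ?oQ.
by move/eqP; rewrite dot_eq0 subr_eq0 => /eqP.
Qed.

Lemma orth_proj_hyperplane n :
  n != 0 -> orth_proj (hyperplane n) = hyperplane_proj n.
Proof.
move=> n0; apply: xget_unique; first exact: hyperplane_proj_is_orth_proj.
move=> Q hQ; apply: orth_proj_unique hQ (hyperplane_proj_is_orth_proj n0).
by move=> u v; rewrite /hyperplane /= dotBl => -> ->; rewrite subrr.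
Qed.

Lemma specnorm_hyperplane_proj_sub_le n m (eps : R) :
  n != 0 -> m != 0 -> 0 <= eps ->
  dot n n * dot m m - dot n m ^+ 2 <= eps ^+ 2 * (dot n n * dot m m) ->
  specnorm (orth_proj (hyperplane n) - orth_proj (hyperplane m)) <= eps.
Proof.
move=> n0 m0 eps_ge0 sin2_le; rewrite !orth_proj_hyperplane //.
have s_gt0 : 0 < dot n n by rewrite dot_gt0.
have t_gt0 : 0 < dot m m by rewrite dot_gt0.
apply: ge_sup.
  by exists 0, 0; rewrite mul0mx norm2_dot dot0l sqrtr0 ler01.
move=> _ [x [x_le1 ->]].
have X_le1 : dot x x <= 1.
  by rewrite -(ler_sqrt _ ler01) sqrtr1 -norm2_dot.
set s := dot n n in s_gt0 sin2_le *; set t := dot m m in t_gt0 sin2_le *.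
set g := dot n m in sin2_le *; set a := dot x n; set b := dot x m.
have yE : x *m (hyperplane_proj n - hyperplane_proj m) = (b / t) *: m - (a / s) *: n.
  rewrite mulmxBr !hyperplane_projE; apply/matrixP => i j; rewrite !mxE /a /b /s /t.
  ring.
have y_sqr : dot ((b / t) *: m - (a / s) *: n) ((b / t) *: m - (a / s) *: n)
    = (s * b ^+ 2 - 2 * a * b * g + a ^+ 2 * t) / (s * t).
  rewrite !(dotBl, dotBr, dotZl, dotZr) (dotC m n) -/s -/t -/g.
  by field; rewrite !gt_eqF.
have num_le : s * b ^+ 2 - 2 * a * b * g + a ^+ 2 * t <= eps ^+ 2 * (s * t).
  apply: le_trans (gram3_det_ge0 x m n0) _; rewrite -/s -/t -/g -/a -/b.
  apply: le_trans sin2_le; rewrite -[leRHS]mul1r ler_wpM2r //.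
  by rewrite subr_ge0 dot_sqr_le.
rewrite norm2_dot yE y_sqr -(ger0_norm eps_ge0) -sqrtr_sqr ler_sqrt ?sqr_ge0 //.
by rewrite ler_pdivrMr ?mulr_gt0.
Qed.

End RowDot.

Section ArxHyperplane.
Variable R : realType.

(* [F, -1] as a row of length N2, where N2 = K.+1 is kept abstract because
   2 * L and (2 * L - 1).+1 are not convertible. *)
Definition augment_neg1 K N2 (F : 'rV[R]_K) : 'rV[R]_N2 :=
  \row_(i < N2) (if (i < K)%N then vat F i else -1).

Lemma vat_ord K (v : 'rV[R]_K) (i : 'I_K) : vat v i = v 0 i.
Proof.
rewrite /vat; case: insubP => [j _ hj|]; last by rewrite ltn_ord.
by congr (v 0 _); apply: val_inj.
Qed.

Lemma vat_augment_neg1 K N2 (F : 'rV[R]_K) j : (j < N2)%N ->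
  vat (augment_neg1 N2 F) j = if (j < K)%N then vat F j else -1.
Proof. by move=> hj; rewrite /vat insubT /= mxE. Qed.

Lemma vat_Fvec L (a b : nat -> R) j : (j < 2 * L - 1)%N ->
  vat (Fvec L a b) j =
    if (j < 2 * L - 2)%N then (if odd j then b j./2 else a j./2) else b L.-1.
Proof. by move=> hj; rewrite /vat insubT /= mxE. Qed.

Lemma dot_vat K (x y : 'rV[R]_K) : dot x y = \sum_(0 <= i < K) vat x i * vat y i.
Proof. by rewrite big_mkord; apply: eq_bigr => i _; rewrite !vat_ord. Qed.

Lemma dot_augment_neg1 K N2 (F G : 'rV[R]_K) : N2 = K.+1 ->
  dot (augment_neg1 N2 F) (augment_neg1 N2 G) = dot F G + 1.
Proof.
move=> ->; rewrite !dot_vat big_nat_recr //= !vat_augment_neg1 // ltnn mulrNN mulr1.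
congr (_ + _); rewrite big_nat_cond [RHS]big_nat_cond; apply: eq_bigr => i.
by rewrite andbT => /andP[_ hi]; rewrite !vat_augment_neg1 ?hi // ltnW.
Qed.

Lemma augment_neg1_neq0 K N2 (F : 'rV[R]_K) : N2 = K.+1 -> augment_neg1 N2 F != 0.
Proof.
move=> eN; rewrite -dot_eq0 dot_augment_neg1 // gt_eqF //.
by rewrite ltr_wpDl ?dot_ge0.
Qed.

Lemma sum_nat_recr_eq (f : nat -> R) n m : n = m.+1 ->
  \sum_(0 <= i < n) f i = \sum_(0 <= i < m) f i + f m.
Proof. by move=> ->; rewrite big_nat_recr. Qed.

Lemma sum_pairs K (f : nat -> R) :
  \sum_(0 <= i < 2 * K) f i = \sum_(k < K) (f (2 * k)%N + f (2 * k).+1).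
Proof.
elim: K => [|K IH]; first by rewrite muln0 big_geq // big_ord0.
have -> : (2 * K.+1 = (2 * K).+2)%N by lia.
by rewrite big_ord_recr !big_nat_recr //= -IH addrA.
Qed.

Lemma sum_Fvec L (a b g : nat -> R) : (1 <= L)%N ->
  \sum_(0 <= i < 2 * L - 1) g i * vat (Fvec L a b) i =
  \sum_(k < L.-1) a k * g (2 * k)%N + \sum_(k < L) b k * g (uidx L k).
Proof.
case: L => // K _; rewrite (@sum_nat_recr_eq _ _ (2 * K)); last by lia.
rewrite vat_Fvec; last by lia.
have -> : (2 * K < 2 * K.+1 - 2)%N = false by lia.
rewrite big_ord_recr /= addrA mulrC; congr (_ + b K * _); last first.
  by rewrite /uidx ltnn; congr g; lia.
rewrite big_nat_cond (eq_bigr (fun i => g i * if odd i then b i./2 else a i./2)).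
  rewrite -big_nat_cond sum_pairs -big_split /=; apply: eq_bigr => k _.
  rewrite /uidx ltn_ord oddM /= !(mulrC (g _)); congr (a _ * _ + b _ * _); lia.
move=> i; rewrite andbT => /andP[_ hi]; rewrite vat_Fvec; last by lia.
by have -> : (i < 2 * K.+1 - 2)%N by lia.
Qed.

Lemma arx_set_hyperplane L (a b : nat -> R) : (1 <= L)%N ->
  arx_set L a b = hyperplane (augment_neg1 (2 * L) (Fvec L a b)).
Proof.
move=> hL; have eN : (2 * L = (2 * L - 1).+1)%N by lia.
apply/funext => v; apply/propext; rewrite /arx_set /hyperplane /=.
have -> : dot v (augment_neg1 (2 * L) (Fvec L a b)) =
   (\sum_(k < L.-1) a k * vat v (2 * k) + \sum_(k < L) b k * vat v (uidx L k))
   - vat v (2 * L - 1).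
  rewrite dot_vat (sum_nat_recr_eq _ eN) vat_augment_neg1; last by lia.
  rewrite ltnn mulrN1 -sum_Fvec //.
  rewrite big_nat_cond [in RHS]big_nat_cond.
  congr (_ - _); apply: eq_bigr => i /andP[/andP[_ hi] _].
  by rewrite vat_augment_neg1 ?hi //; lia.
by split => [->|/eqP]; [rewrite subrr | rewrite subr_eq0 => /eqP ->].
Qed.

(* With p = |F|^2, q = |G|^2, r = <F, G>:
   (p + 1) (q + 1) - (r + 1)^2 = (p + q - 2 r) (p + 1) - (p - r)^2. *)
Lemma augment_neg1_sin2_le K N2 (F G : 'rV[R]_K)
    (n := augment_neg1 N2 F) (m := augment_neg1 N2 G) : N2 = K.+1 ->
  dot n n * dot m m - dot n m ^+ 2 <= dot (F - G) (F - G) * (dot n n * dot m m).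
Proof.
move=> eN; rewrite /n /m !dot_augment_neg1 //.
have dFG : dot (F - G) (F - G) = dot F F + dot G G - 2 * dot F G.
  by rewrite !(dotBl, dotBr) (dotC G F); ring.
move: (dot_ge0 F) (dot_ge0 G) (dot_ge0 (F - G)); rewrite dFG.
set p := dot F F; set q := dot G G; set r := dot F G => p_ge0 q_ge0 d_ge0.
have sin2_eq : (p + 1) * (q + 1) - (r + 1) ^+ 2
    = (p + q - 2 * r) * (p + 1) - (p - r) ^+ 2 by ring.
rewrite sin2_eq; apply: le_trans (_ : _ <= (p + q - 2 * r) * (p + 1)) _.
  by rewrite lerBlDr lerDl sqr_ge0.
by apply: ler_wpM2l => //; rewrite ler_peMr ?addr_ge0 // lerDr.
Qed.

End ArxHyperplane.

Theorem corollary2 (R : realType) (L : nat) (a b at_ bt : nat -> R)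
    (B Bt : set (traj R)) (eps : R) :
  (2 <= L)%N ->
  in_L2 B -> in_L2 Bt -> lag_lt Bt L ->
  restr L B = arx_set L a b ->
  restr L Bt = arx_set L at_ bt ->
  norm2 (Fvec L a b - Fvec L at_ bt) <= eps ->
  gapL L B Bt <= eps.
Proof.
move=> L_ge2 _ _ _ BE BtE F_le.
have L_ge1 : (1 <= L)%N by lia.
have eN : (2 * L = (2 * L - 1).+1)%N by lia.
have eps_ge0 : 0 <= eps by apply: le_trans F_le; rewrite norm2_dot sqrtr_ge0.
rewrite /gapL /gap BE BtE !arx_set_hyperplane //.
apply: specnorm_hyperplane_proj_sub_le; rewrite ?augment_neg1_neq0 //.
apply: le_trans (augment_neg1_sin2_le _ _ eN) _; apply: ler_wpM2r.
  by rewrite mulr_ge0 ?dot_ge0.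
by rewrite -ler_sqrt ?sqr_ge0 ?dot_ge0 // sqrtr_sqr ger0_norm // -norm2_dot.
Qed.
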